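(* For every connected graph $G$ with at least two vertices, there is a simple protocol solving multiparty equality on $G$ in the local broadcast model whose per-bit cost is at most $2\cdot\frac{\gamma(G)}{\gamma_f(G)}\cdot \mathrm{opt}(G)$.
   Context: Multiparty equality in the local broadcast model: every vertex $v$ of a connected graph $G$ receives an input $\lambda(v)\in\{0,1\}^k$. Vertices communicate by broadcasting messages, received by all neighbours and counted once. Protocols are deterministic and static: which vertices send and message lengths depend only on $G$ and $k$, contents may depend on inputs. At the end every vertex accepts or rejects; the protocol solves the problem if all vertices accept when all inputs are equal and at least one rejects when two inputs differ. Total cost = sum of the numbers of bits broadcast; $\mathrm{opt}(G,k)$ is the minimum total cost of a solving protocol and $\mathrm{opt}(G)=\lim_{k\to\infty}\mathrm{opt}(G,k)/k$. A simple protocol: each vertex of a fixed set $S$ broadcasts its whole input, others are silent, and each vertex accepts iff all inputs it received equal its own; its per-bit cost is $|S|$. $\gamma(G)$ is the domination number and $\gamma_f(G)$ the fractional domination number (minimum of $\sum_v x(v)$ over $x\ge0$ with $\sum_{u\in N[v]}x(u)\ge1$ for all $v$, $N[v]$ the closed neighbourhood). *)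

From HB Require Import structures.
From mathcomp Require Import all_boot all_order all_algebra.
From mathcomp Require Import all_classical all_reals all_analysis.
Set Implicit Arguments. Unset Strict Implicit. Unset Printing Implicit Defensive.
Import Order.TTheory GRing.Theory Num.Theory.
Local Open Scope ring_scope.

Definition simple_graph (V : finType) (e : rel V) : Prop :=
  symmetric e /\ irreflexive e.

Definition connected_graph (V : finType) (e : rel V) : Prop :=
  forall u v : V, connect e u v.

Definition cnbr (V : finType) (e : rel V) (v u : V) : bool := (u == v) || e v u.

Definition dominating (V : finType) (e : rel V) (D : {set V}) : bool :=
  [forall v, [exists u in D, cnbr e v u]].

Definition domination_number (V : finType) (e : rel V) : nat :=
  #|[arg min_(D < [set: V] | dominating e D) #|D|]|.

Definition frac_dominating (R : realType) (V : finType) (e : rel V) (x : V -> R) : Prop :=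
  (forall v, 0 <= x v) /\ (forall v, 1 <= \sum_(u | cnbr e v u) x u).

Definition frac_domination_number (R : realType) (V : finType) (e : rel V) : R :=
  inf [set s : R | exists x : V -> R, frac_dominating e x /\ s = \sum_v x v].

(* ---------- Deterministic static protocols in the local broadcast model ----------
   schedule : the (static) sequence of broadcasts (sender, message length);
   message t x view : contents of the t-th broadcast, computed by the sender from its
                      input x and its view (all messages broadcast so far in its
                      closed neighbourhood, in order);
   decision v x view : final accept (true) / reject of vertex v. *)
Record protocol (V : finType) (k : nat) := Protocol {
  schedule : seq (V * nat);
  message : nat -> k.-tuple bool -> seq bitseq -> bitseq;
  decision : V -> k.-tuple bool -> seq bitseq -> bool }.

Definition resize (l : nat) (m : bitseq) : bitseq := take l (m ++ nseq l false).

Fixpoint exec_from (V : finType) (e : rel V) (k : nat) (P : protocol V k)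
    (lam : V -> k.-tuple bool) (sch : seq (V * nat)) (t : nat)
    (tr : seq (V * bitseq)) : seq (V * bitseq) :=
  match sch with
  | [::] => tr
  | (s, l) :: sch' =>
      let view := [seq p.2 | p <- tr & cnbr e s p.1] in
      exec_from e P lam sch' t.+1 (rcons tr (s, resize l (message P t (lam s) view)))
  end.

Definition transcript (V : finType) (e : rel V) (k : nat) (P : protocol V k)
    (lam : V -> k.-tuple bool) : seq (V * bitseq) :=
  exec_from e P lam (schedule P) 0 [::].

Definition view_of (V : finType) (e : rel V) (k : nat) (P : protocol V k)
    (lam : V -> k.-tuple bool) (v : V) : seq bitseq :=
  [seq p.2 | p <- transcript e P lam & cnbr e v p.1].

Definition accepts (V : finType) (e : rel V) (k : nat) (P : protocol V k)
    (lam : V -> k.-tuple bool) (v : V) : bool :=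
  decision P v (lam v) (view_of e P lam v).

Definition solves (V : finType) (e : rel V) (k : nat) (P : protocol V k) : Prop :=
  forall lam : V -> k.-tuple bool,
    ((forall u v, lam u = lam v) -> forall v, accepts e P lam v) /\
    ((exists u v, lam u <> lam v) -> exists v, ~~ accepts e P lam v).

Definition cost (V : finType) (k : nat) (P : protocol V k) : nat :=
  sumn [seq p.2 | p <- schedule P].

Definition is_opt (V : finType) (e : rel V) (k : nat) (c : nat) : Prop :=
  (exists P : protocol V k, solves e P /\ cost P = c) /\
  (forall P : protocol V k, solves e P -> (c <= cost P)%N).

Definition simple_protocol (V : finType) (k : nat) (S : {set V}) : protocol V k :=
  @Protocol V k [seq (v, k) | v <- enum S]
    (fun _ x _ => val x)
    (fun _ x view => all (fun m => m == val x) view).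

From HB Require Import structures.
From mathcomp Require Import all_boot all_order all_algebra.
From mathcomp Require Import all_classical all_reals all_analysis.
Import Order.TTheory GRing.Theory Num.Theory numFieldNormedType.Exports.
Local Open Scope ring_scope.
Set Implicit Arguments. Unset Strict Implicit. Unset Printing Implicit Defensive.

(* Lower bound: in a protocol solving equality with k-bit inputs, the view of a
   vertex v on constant inputs must determine the input (otherwise an input that
   differs only at v fools everybody), so the closed neighbourhood of v broadcasts
   at least k bits.  Dividing the number of bits sent by each vertex by k thus
   gives a fractional dominating function of weight cost/k, whence
   gamma_f <= opt(G) (and gamma_f >= 1).
   Upper bound: take a minimum dominating set D and greedily add connectors: as
   long as the vertices reachable from some d0 in D, through edges with an
   endpoint in the current set, are not everything, a boundary edge xy of that
   region and a dominator of y show that adding x reaches a new vertex of D.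
   At most |D| additions make the simple protocol correct, so |S| <= 2 gamma
   <= 2 (gamma / gamma_f) opt(G). *)

Section Execution.
Variables (V : finType) (e : rel V) (k : nat) (P : protocol V k).

Lemma size_resize l m : size (resize l m) = l.
Proof.
by rewrite /resize size_take size_cat size_nseq; apply/minn_idPl; rewrite leq_addl.
Qed.

Lemma exec_from_prefix lam sch t tr :
  exists rest, exec_from e P lam sch t tr = tr ++ rest.
Proof.
elim: sch t tr => [|[s l] sch IH] t tr /=; first by exists [::]; rewrite cats0.
have [rest ->] := IH t.+1 (rcons tr (s, resize l (message P t (lam s)
   [seq p.2 | p <- tr & cnbr e s p.1]))).
by eexists; rewrite cat_rcons.
Qed.

Lemma exec_from_shape lam sch t tr :
  [seq (p.1, size p.2) | p <- exec_from e P lam sch t tr] =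
  [seq (p.1, size p.2) | p <- tr] ++ sch.
Proof.
elim: sch t tr => [|[s l] sch IH] t tr /=; first by rewrite cats0.
by rewrite IH map_rcons /= size_resize cat_rcons.
Qed.

Lemma transcript_shape lam :
  [seq (p.1, size p.2) | p <- transcript e P lam] = schedule P.
Proof. by rewrite /transcript exec_from_shape. Qed.

Lemma transcript_senders lam lam' :
  [seq p.1 | p <- transcript e P lam] = [seq p.1 | p <- transcript e P lam'].
Proof.
have := congr1 (map fst) (transcript_shape lam).
have := congr1 (map fst) (transcript_shape lam').
by rewrite -!map_comp => -> ->.
Qed.

Lemma view_of_shape lam v :
  shape (view_of e P lam v) = [seq p.2 | p <- schedule P & cnbr e v p.1].
Proof.
rewrite /view_of /shape -(transcript_shape lam).
elim: (transcript e P lam) => //= [[a b] s IH] /=.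
by case: (cnbr e v a) => //=; rewrite IH.
Qed.

End Execution.

Lemma eq_filter_fst (A B : Type) (Q : pred A) (s1 s2 : seq (A * B)) :
  [seq p.1 | p <- s1] = [seq p.1 | p <- s2] ->
  [seq p.2 | p <- s1 & Q p.1] = [seq p.2 | p <- s2 & Q p.1] ->
  [seq p <- s1 | Q p.1] = [seq p <- s2 | Q p.1].
Proof.
elim: s1 s2 => [|[a b] s1 IH] [|[a' b'] s2] //= [<- /IH {}IH].
by case: (Q a) => //= -[<- /IH ->].
Qed.

Section Fooling.
Variables (V : finType) (e : rel V) (k : nat) (P : protocol V k).
Variables (v : V) (x y : k.-tuple bool) (lam : V -> k.-tuple bool).
Hypothesis lam_v : lam v = x.
Hypothesis lam_other : forall w, w != v -> lam w = y.

(* If v sees the same messages on the constant inputs x and y, the run on the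
   input that is x at v and y elsewhere coincides with the run on constant y:
   every message sent by v is one that v itself receives. *)
Lemma exec_from_fooling sch t trX trY :
  [seq p <- trX | cnbr e v p.1] = [seq p <- trY | cnbr e v p.1] ->
  [seq p <- exec_from e P (fun _ => x) sch t trX | cnbr e v p.1] =
  [seq p <- exec_from e P (fun _ => y) sch t trY | cnbr e v p.1] ->
  exec_from e P lam sch t trY = exec_from e P (fun _ => y) sch t trY.
Proof.
elim: sch t trX trY => [|[s l] sch IH] t trX trY //= eq_tr eq_exec.
set newX := (s, resize l (message P t x [seq p.2 | p <- trX & cnbr e s p.1])).
set newY := (s, resize l (message P t y [seq p.2 | p <- trY & cnbr e s p.1])).
have heard_eq : cnbr e v s -> newX = newY.
  move=> vs; move: eq_exec.
  have [rX ->] := exec_from_prefix e P (fun _ => x) sch t.+1 (rcons trX newX).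
  have [rY ->] := exec_from_prefix e P (fun _ => y) sch t.+1 (rcons trY newY).
  rewrite !filter_cat !filter_rcons /= vs eq_tr -!cats1 -!catA.
  set seen := [seq p <- trY | _].
  by move/(congr1 (fun r => head newX (drop (size seen) r))); rewrite !drop_size_cat.
have eq_tr' : [seq p <- rcons trX newX | cnbr e v p.1] =
              [seq p <- rcons trY newY | cnbr e v p.1].
  by rewrite !filter_rcons /= eq_tr; case vs: (cnbr e v s); rewrite ?heard_eq.
suff -> : (s, resize l (message P t (lam s) [seq p.2 | p <- trY & cnbr e s p.1]))
          = newY by exact: IH eq_tr' eq_exec.
have [sv | /lam_other -> //] := eqVneq s v.
rewrite -heard_eq; last by rewrite /cnbr sv eqxx.
by rewrite /newX sv lam_v eq_tr.
Qed.

End Fooling.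

Section NeighbourhoodBits.
Variables (V : finType) (e : rel V) (k : nat) (P : protocol V k).
Hypothesis P_solves : solves e P.
Hypothesis card_V : (2 <= #|V|)%N.

Lemma view_of_const_inj v :
  injective (fun x : k.-tuple bool => view_of e P (fun _ => x) v).
Proof.
move=> x y eq_view; apply/eqP; apply: contraT => neq_xy.
pose lam w := if w == v then x else y.
have tr_lam : transcript e P lam = transcript e P (fun _ => y).
  apply: (@exec_from_fooling V e k P v x y) => //.
  - by rewrite /lam eqxx.
  - by move=> w /negPf; rewrite /lam => ->.
  - exact: eq_filter_fst (transcript_senders e P _ _) eq_view.
have [w wv] : exists w, w != v.
  move: card_V; rewrite (cardD1 v) ltnS => /card_gt0P [w].
  by rewrite !inE => /andP[wv _]; exists w.
have lam_nonconst : exists u w, lam u <> lam w.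
  by exists v, w; rewrite /lam eqxx (negPf wv); apply/eqP.
have [u /negP[]] := (P_solves lam).2 lam_nonconst.
rewrite /accepts /view_of tr_lam -/(view_of e P (fun _ => y) u).
have [-> | uv] := eqVneq u v; last by rewrite /lam (negPf uv); exact: (P_solves _).1.
by rewrite /lam eqxx -eq_view; exact: (P_solves _).1.
Qed.

Lemma neighbourhood_bits_ge v :
  (k <= sumn [seq p.2 | p <- schedule P & cnbr e v p.1])%N.
Proof.
set c := sumn _.
have size_view x : size (flatten (view_of e P (fun _ => x) v)) == c.
  by rewrite size_flatten view_of_shape.
pose f (x : k.-tuple bool) : c.-tuple bool := Tuple (size_view x).
have f_inj : injective f.
  move=> x y /(congr1 val) /= eq_flat; apply: (@view_of_const_inj v) => /=.
  by rewrite -[LHS]flattenK -[RHS]flattenK eq_flat !view_of_shape.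
by have := leq_card f f_inj; rewrite !card_tuple card_bool leq_exp2l.
Qed.

End NeighbourhoodBits.

Lemma big_sumn_filter_fst (V : finType) (Q : pred V) (s : seq (V * nat)) :
  (\sum_(u | Q u) sumn [seq p.2 | p <- s & p.1 == u] =
   sumn [seq p.2 | p <- s & Q p.1])%N.
Proof.
elim: s => [|[a l] s IH]; first by rewrite big1.
have split_head u : sumn [seq p.2 | p <- (a, l) :: s & p.1 == u] =
    ((a == u) * l + sumn [seq p.2 | p <- s & p.1 == u])%N.
  by rewrite /=; case: (a == u); rewrite ?mul1n ?mul0n.
rewrite (eq_bigr _ (fun u _ => split_head u)) big_split /= IH.
case Qa: (Q a) => /=; last first.
  by rewrite big1 // => u Qu; case: eqP => // au; rewrite au Qu in Qa.
rewrite (bigD1 a) //= eqxx mul1n big1 ?addn0 // => u /andP[_ ua].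
by rewrite eq_sym (negPf ua).
Qed.

Section FractionalDomination.
Variables (R : realType) (V : finType) (e : rel V).

Lemma frac_domination_number_ge1 : (0 < #|V|)%N -> 1 <= frac_domination_number R e.
Proof.
move=> /card_gt0P [v0 _]; apply: lb_le_inf.
  exists (\sum_(v : V) (1 : R)), (fun _ => 1); split => //; split => // v.
  by rewrite (bigD1 v) /= ?/cnbr ?eqxx // lerDl sumr_ge0.
move=> s [x [[x_ge0 x_dom] ->]]; apply: le_trans (x_dom v0) _.
by rewrite [leRHS](bigID (cnbr e v0)) /= lerDl sumr_ge0.
Qed.

Lemma frac_domination_number_le_cost k (P : protocol V k) :
  (0 < k)%N -> solves e P -> (2 <= #|V|)%N ->
  frac_domination_number R e <= (cost P)%:R / k%:R.
Proof.
move=> k_gt0 P_solves card_V.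
pose x u := (sumn [seq p.2 | p <- schedule P & p.1 == u])%:R / k%:R : R.
have k_gt0R : (0 : R) < k%:R by rewrite ltr0n.
apply: ge_inf; first by exists 0 => s [y [[y_ge0 _] ->]]; exact: sumr_ge0.
exists x; split; first split.
- by move=> u; rewrite /x divr_ge0 // ler0n.
- move=> v; rewrite -mulr_suml -natr_sum big_sumn_filter_fst.
  by rewrite ler_pdivlMr // mul1r ler_nat neighbourhood_bits_ge.
- by rewrite -mulr_suml -natr_sum big_sumn_filter_fst /cost filter_predT.
Qed.

Local Open Scope classical_set_scope.

Lemma frac_domination_number_le_opt (o : nat -> nat) (L : R) :
  (2 <= #|V|)%N -> (forall k, is_opt e k (o k)) ->
  ((fun k : nat => (o k)%:R / k%:R : R) @ \oo --> L) ->
  frac_domination_number R e <= L.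
Proof.
move=> card_V o_opt oL.
apply: (closed_cvg _ (@closed_ge R _) _ _ oL); exists 1%N => // k /= k_gt0.
have [[P [P_solves <-]] _] := o_opt k.
exact: frac_domination_number_le_cost.
Qed.

End FractionalDomination.

Section SimpleProtocol.
Variables (V : finType) (e : rel V).
Hypothesis e_sym : symmetric e.

Lemma cnbrC x y : cnbr e x y = cnbr e y x.
Proof. by rewrite /cnbr eq_sym e_sym. Qed.

(* x and y are linked when one of them is in S and hears the other: the simple
   protocol for S forces equal inputs at linked vertices. *)
Definition linked (S : {set V}) : rel V :=
  fun x y => ((x \in S) || (y \in S)) && cnbr e x y.

Lemma linked_sym S : symmetric (linked S).
Proof. by move=> x y; rewrite /linked orbC cnbrC. Qed.

Lemma connect_linked_sub (S S' : {set V}) x y :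
  S \subset S' -> connect (linked S) x y -> connect (linked S') x y.
Proof.
move=> sSS'; apply: connect_sub => a b /andP[abS ab]; apply: connect1.
by rewrite /linked ab andbT; case/orP: abS => /(fintype.subsetP sSS') ->; rewrite ?orbT.
Qed.

Lemma exec_from_simple k S (lam : V -> k.-tuple bool) s t tr :
  exec_from e (simple_protocol k S) lam [seq (v, k) | v <- s] t tr =
  tr ++ [seq (v, val (lam v)) | v <- s].
Proof.
elim: s t tr => [|a s IH] t tr /=; first by rewrite cats0.
by rewrite IH cat_rcons /resize take_size_cat // size_tuple.
Qed.

Lemma view_of_simple k S (lam : V -> k.-tuple bool) v :
  view_of e (simple_protocol k S) lam v =
  [seq val (lam u) | u <- enum S & cnbr e v u].
Proof.
rewrite /view_of /transcript exec_from_simple /=.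
by elim: (enum S) => //= a s IH; case: (cnbr e v a) => //=; rewrite IH.
Qed.

Lemma simple_protocol_solves k (S : {set V}) :
  (forall u w, connect (linked S) u w) -> solves e (simple_protocol k S).
Proof.
move=> S_conn lam; split.
  move=> lam_const v; rewrite /accepts view_of_simple /=.
  by apply/allP => m /mapP [u _ ->]; rewrite (lam_const u v).
move=> [u0 [w0 neq]].
have [/forallP all_acc | /fintype.forallPn [v rejects]] :=
  boolP [forall v, accepts e (simple_protocol k S) lam v]; last by exists v.
exfalso; apply: neq.
have heard u w : u \in S -> cnbr e w u -> lam w = lam u.
  move=> uS wu; have /allP := all_acc w; rewrite view_of_simple.
  move=> /(_ (val (lam u))) /(_ _) /eqP /val_inj -> //.
  by apply: map_f; rewrite mem_filter wu mem_enum.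
have linked_eq x y : linked S x y -> lam x = lam y.
  case/andP => /orP[xS|yS] xy; last exact: heard.
  by rewrite (heard x y) // cnbrC.
have /connectP [p p_path ->] := S_conn u0 w0.
by elim: p u0 p_path => //= a p IH x /andP[/linked_eq -> /IH].
Qed.

End SimpleProtocol.

Lemma connect_boundary_edge (V : finType) (e : rel V) (A : {set V}) a b :
  a \in A -> b \notin A -> connect e a b ->
  exists x y, [/\ x \in A, y \notin A & e x y].
Proof.
move=> aA bA /connectP [p a_p b_p]; rewrite {b}b_p in bA.
elim: p a aA a_p bA => /= [|c p IH] a aA; first by rewrite aA.
case/andP => ac c_p; have [cA|cA] := boolP (c \in A); first exact: IH.
by exists a, c.
Qed.

Section Connectors.
Variables (V : finType) (e : rel V).
Hypothesis e_sym : symmetric e.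
Hypothesis e_conn : connected_graph e.
Variables (D : {set V}) (d0 : V).
Hypothesis d0_in_D : d0 \in D.
Hypothesis D_dom : dominating e D.

Definition reach (T : {set V}) : {set V} :=
  [set w | connect (linked e (D :|: T)) d0 w].

Lemma reach_grow T : reach T != [set: V] ->
  exists x, (#|D :&: reach T| < #|D :&: reach (x |: T)|)%N.
Proof.
rewrite finset.eqEsubset finset.subsetT => /fintype.subsetPn [y0 _ y0_out].
have d0_in : d0 \in reach T by rewrite inE connect0.
have [x [y [x_in y_out xy]]] := connect_boundary_edge d0_in y0_out (e_conn d0 y0).
have /existsP [d /andP [dD yd]] := forallP D_dom y.
have d_out : d \notin reach T.
  apply: contra y_out; rewrite !inE => d0d; apply: connect_trans d0d (connect1 _).
  by rewrite /linked inE dD cnbrC.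
have sub_T : D :|: T \subset D :|: (x |: T).
  by rewrite finset.setUS // finset.subsetUr.
have reach_sub : reach T \subset reach (x |: T).
  by apply/fintype.subsetP => z; rewrite !inE; exact: connect_linked_sub.
have d_in : d \in reach (x |: T).
  have d0x : connect (linked e (D :|: (x |: T))) d0 x.
    by rewrite inE in x_in; exact: connect_linked_sub x_in.
  rewrite inE; apply: connect_trans d0x (connect_trans (y := y) (connect1 _) (connect1 _)).
  - by rewrite /linked !inE eqxx orbT /cnbr xy orbT.
  - by rewrite /linked !inE dD orbT yd.
exists x; apply: (leq_trans _ (subset_leq_card (_ : d |: (D :&: reach T) \subset _))).
  by rewrite cardsU1 inE negb_and d_out orbT.
by rewrite finset.subUset finset.sub1set inE dD d_in finset.setIS.
Qed.

Lemma reach_grow_iter n : exists T : {set V},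
  (#|T| <= n)%N /\ (reach T = [set: V] \/ (n < #|D :&: reach T|)%N).
Proof.
elim: n => [|n [T [T_card T_reach]]].
  exists finset.set0; split; rewrite ?cards0 //; right.
  by rewrite card_gt0; apply/set0Pn; exists d0; rewrite !inE d0_in_D connect0.
have [T_full | T_part] := eqVneq (reach T) [set: V].
  by exists T; split; [exact: leqW | left].
have [x x_grow] := reach_grow T_part.
exists (x |: T); split; first by rewrite cardsU1 (leq_add (leq_b1 _) T_card).
case: T_reach => [/eqP | T_large]; first by rewrite (negPf T_part).
by right; exact: leq_ltn_trans T_large x_grow.
Qed.

Lemma reach_full : exists T : {set V}, (#|T| <= #|D|)%N /\ reach T = [set: V].
Proof.
have [T [T_card [T_full | D_large]]] := reach_grow_iter #|D|; first by exists T.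
by move: D_large; rewrite ltnNge subset_leq_card ?subsetIl.
Qed.

End Connectors.

Lemma simple_protocol_card_le_domination (V : finType) (e : rel V) :
  simple_graph e -> connected_graph e -> (0 < #|V|)%N ->
  exists S : {set V}, (forall k, solves e (simple_protocol k S)) /\
    (#|S| <= 2 * domination_number e)%N.
Proof.
move=> [e_sym _] e_conn /card_gt0P [v0 _].
have domT : dominating e [set: V].
  by apply/forallP => v; apply/existsP; exists v; rewrite inE /cnbr eqxx.
rewrite /domination_number; case: (arg_minnP (fun D : {set V} => #|D|) domT).
move=> D D_dom _; have /existsP [d0 /andP [d0D _]] := forallP D_dom v0.
have [T [T_card T_full]] := reach_full e_sym e_conn d0D D_dom.
have reach_all z : connect (linked e (D :|: T)) d0 z.
  by have := finset.in_setT z; rewrite -T_full inE.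
exists (D :|: T); split.
  move=> k; apply: simple_protocol_solves => // u w.
  apply: (connect_trans (y := d0)); last exact: reach_all.
  by rewrite (sym_connect_sym (linked_sym e_sym _)) reach_all.
by rewrite mul2n -addnn (leq_trans (leq_card_setU D T).1) ?leq_add2l.
Qed.

Local Open Scope classical_set_scope.

Theorem corollary3p3 (R : realType) (V : finType) (e : rel V) :
  simple_graph e -> connected_graph e -> (2 <= #|V|)%N ->
  exists S : {set V},
    (forall k : nat, solves e (simple_protocol k S)) /\
    (forall (o : nat -> nat) (L : R),
       (forall k : nat, is_opt e k (o k)) ->
       ((fun k : nat => (o k)%:R / k%:R : R) @ \oo --> L) ->
       (#|S|%:R : R) <= 2 * ((domination_number e)%:R / frac_domination_number R e) * L).
Proof.
move=> G_simple G_conn card_V.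
have [S [S_solves S_card]] :=
  simple_protocol_card_le_domination G_simple G_conn (ltnW card_V).
exists S; split => // o L o_opt oL.
set gf := frac_domination_number R e; set g := (domination_number e)%:R : R.
have gf_ge1 : 1 <= gf by exact: frac_domination_number_ge1 (ltnW card_V).
have gf_gt0 : 0 < gf by exact: lt_le_trans gf_ge1.
have gf_le_L : gf <= L by exact: frac_domination_number_le_opt card_V o_opt oL.
apply: (@le_trans _ _ (2 * g)); first by rewrite -natrM ler_nat.
have -> : 2 * (g / gf) * L = 2 * g * (L / gf) by rewrite -!mulrA (mulrC gf^-1).
by rewrite ler_peMr ?mulr_ge0 ?ler0n // ler_pdivlMr // mul1r.
Qed.
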